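(* Let $G$ be a finite group (not necessarily abelian, written additively) of even order $q$, and let $f:G\to G$ be two-to-one (every element of the image of $f$ has exactly two preimages). Then \[\mathrm{pres}(f)\le \lceil 2\sqrt{q}\rceil-1.\] Moreover, if $q$ is a perfect square, then $\mathrm{pres}(f)\le 2\sqrt{q}-2$.
   Context: For a function $g:G\to G$, $V(g)$ denotes the number of distinct values of $g$, i.e. $V(g)=\#\{g(x):x\in G\}$. A permutation of $G$ is a bijection $G\to G$. For functions $f,h:G\to G$, $f-h$ is the pointwise function $x\mapsto f(x)-h(x)$, and $g+f$ is $x\mapsto g(x)+f(x)$. The permutation resemblance of $f:G\to G$ is $\mathrm{pres}(f)=\min\{V(f-h): h \text{ a permutation of } G\}$, equivalently $\mathrm{pres}(f)=\min\{V(g): g:G\to G,\ g+f \text{ is a permutation of } G\}$. *)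

From HB Require Import structures.
From mathcomp Require Import all_boot all_order all_algebra all_fingroup.
From mathcomp Require Import Rstruct.
Set Implicit Arguments. Unset Strict Implicit. Unset Printing Implicit Defensive.
Import Order.TTheory GRing.Theory Num.Theory.

(* A finite group G is a finGroupType gT (the group is the whole carrier);
   MathComp writes groups multiplicatively, so the paper's x - y is x * y^-1. *)

Definition V (gT : finType) (g : gT -> gT) : nat := #|[set g x | x : gT]|.

Definition fsub (gT : finGroupType) (f h : gT -> gT) : gT -> gT :=
  fun x => (f x * (h x)^-1)%g.

Definition pres (gT : finGroupType) (f : gT -> gT) : nat :=
  \big[minn/#|gT|]_(h : {perm gT}) V (fsub f h).

Definition two_to_one (gT : finType) (f : gT -> gT) : Prop :=
  forall y : gT, y \in codom f -> #|[set x | f x == y]| = 2.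

From HB Require Import structures.
From mathcomp Require Import all_boot all_order all_algebra all_fingroup.
From mathcomp Require Import Rstruct zify lra.
Import Order.TTheory GRing.Theory Num.Theory.

(* Let Y be the image of f and U its complement, both of size q/2.  Any injection
   beta : Y -> U gives a permutation h of G: of the two preimages of y in Y, send
   one to y and the other to beta y.  Then f - h takes the value 1 and the inverses
   of the shifts beta y - y, so pres f is at most one more than the number of
   shifts.  Greedily, some translation t carries at least m^2/(q-1) of the m points
   of Y that are still unmatched into the unused part of U.  After n such steps,
   fewer than q/(n+2) points remain, and each of them costs at most one more shift.
   Taking n close to sqrt q gives the bound. *)

Set Implicit Arguments.
Unset Strict Implicit.
Unset Printing Implicit Defensive.

Section ShiftMatching.

Variable gT : finGroupType.
Implicit Types (Y U : {set gT}) (t : gT).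

Definition shift_matching Y U (b : nat) : Prop :=
  exists beta : gT -> gT, [/\ {in Y &, injective beta}, {in Y, forall y, beta y \in U}
    & #|[set (beta y * y^-1)%g | y in Y]| <= b].

Lemma shift_matching_leq Y U b b' :
  b <= b' -> shift_matching Y U b -> shift_matching Y U b'.
Proof.
by move=> le_bb' [beta [inj_beta betaU le_b]]; exists beta; split=> //; apply: leq_trans le_bb'.
Qed.

Lemma shift_matching0 U : shift_matching set0 U 0.
Proof. by exists id; split=> [? ?|?|]; rewrite ?inE // imset0 cards0. Qed.

Definition matched_by t Y U := [set y in Y | (t * y)%g \in U].

Lemma sum_card_matched_by Y U : \sum_t #|matched_by t Y U| = #|Y| * #|U|.
Proof.
have -> : \sum_t #|matched_by t Y U| = \sum_(y in Y) \sum_t ((t * y)%g \in U).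
  rewrite exchange_big /=; apply: eq_bigr => t _.
  rewrite -sum1_card big_mkcond [RHS]big_mkcond /=.
  by apply: eq_bigr => y _; rewrite inE; case: (_ \in Y).
rewrite -sum_nat_const; apply: eq_bigr => y _.
rewrite (reindex_inj (mulIg (y^-1)%g)) /=.
by rewrite -sum1_card [RHS]big_mkcond; apply: eq_bigr => t _; rewrite mulgKV; case: (_ \in U).
Qed.

(* Averaging over t != 1; t = 1 matches nothing since Y and U are disjoint. *)
Lemma exists_dense_translate Y U : [disjoint Y & U] ->
  exists t, #|Y| * #|U| <= (#|gT| - 1) * #|matched_by t Y U|.
Proof.
move=> dYU; set F := fun t => #|matched_by t Y U|.
case: (@arg_maxnP _ 1%g predT F isT) => t _ Ft_max; exists t.
rewrite -sum_card_matched_by (bigD1 1%g) //=.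
have -> : #|matched_by 1%g Y U| = 0.
  apply/eqP; rewrite cards_eq0; apply/eqP/setP => y; rewrite !inE mul1g.
  by case: (boolP (y \in Y)) => // /(disjointFr dYU) ->.
apply: (@leq_trans (\sum_(u | u != 1%g) F t)).
  by rewrite add0n; apply: leq_sum => u _; apply: Ft_max.
by rewrite sum_nat_const (cardC1 (1%g : gT)) subn1.
Qed.

Lemma shift_matching_translate Y U t b :
  let M := matched_by t Y U in
  shift_matching (Y :\: M) (U :\: (t *: M)%g) b -> shift_matching Y U b.+1.
Proof.
move=> M [beta [inj_beta betaU shifts_b]].
have betaU' y : y \in Y -> y \notin M -> beta y \in U :\: (t *: M)%g.
  by move=> yY yM; apply: betaU; rewrite inE yM.
have tM y : y \in M -> (t * y)%g \in (t *: M)%g.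
  by move=> yM; rewrite mem_lcoset mulKg.
exists (fun y => if y \in M then (t * y)%g else beta y); split.
- move=> y z yY zY /=; case: ifP => yM; case: ifP => zM.
  + exact: mulgI.
  + by move=> tyz; have := betaU' z zY (negbT zM); rewrite -tyz inE tM.
  + by move=> tyz; have := betaU' y yY (negbT yM); rewrite tyz inE tM.
  + by apply: inj_beta; rewrite inE ?yM ?zM.
- move=> y yY /=; case: ifP => [|yM]; first by rewrite inE => /andP[].
  by have /setDP[] := betaU' y yY (negbT yM).
apply: leq_trans (_ : #|t |: [set (beta y * y^-1)%g | y in Y :\: M]| <= _).
  apply/subset_leq_card/subsetP => _ /imsetP [y yY ->].
  rewrite in_setU1; case: ifP => yM; first by rewrite mulgK eqxx.
  by apply/orP; right; apply: imset_f; rewrite in_setD yM yY.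
by rewrite cardsU1 -add1n leq_add ?leq_b1.
Qed.

Lemma greedy_step Y U m : [disjoint Y & U] -> #|Y| = m -> #|U| = m ->
  exists c Y' U', [/\ m * m <= (#|gT| - 1) * c, c <= m, #|Y'| = m - c /\ #|U'| = m - c,
    [disjoint Y' & U'] & forall b, shift_matching Y' U' b -> shift_matching Y U b.+1].
Proof.
move=> dYU cY cU; have [t] := exists_dense_translate dYU; rewrite cY cU.
set M := matched_by t Y U => dense.
have sMY : M \subset Y by apply/subsetP => y; rewrite inE => /andP[].
have sTU : (t *: M)%g \subset U.
  by apply/subsetP => _ /lcosetP[y + ->]; rewrite inE => /andP[].
exists #|M|, (Y :\: M), (U :\: t *: M)%g; split=> //.
- by rewrite -cY subset_leq_card.
- by rewrite !cardsD (setIidPr sMY) (setIidPr sTU) card_lcoset cY cU.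
- by apply: disjointW dYU; apply: subsetDl.
- exact: shift_matching_translate.
Qed.

Lemma shift_matching_card Y U m :
  [disjoint Y & U] -> #|Y| = m -> #|U| = m -> shift_matching Y U m.
Proof.
move: Y U; elim/ltn_ind: m => m IHm Y U dYU cY cU.
have [m0 | m_gt0] := posnP m.
  by move/eqP: cY; rewrite m0 cards_eq0 => /eqP ->; apply: shift_matching0.
have [c [Y' [U' [dense le_cm [cY' cU'] dYU' extend]]]] := greedy_step dYU cY cU.
have c_gt0 : 0 < c.
  by rewrite lt0n; apply: contraTneq dense => ->; rewrite muln0 -ltnNge muln_gt0 m_gt0.
apply: (shift_matching_leq (b := (m - c).+1)); first by lia.
by apply/extend/IHm; first lia.
Qed.

(* Each step matches c >= m^2/(q-1) points, which turns m * j <= q into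
   (m - c) * (j + 1) < q. *)
Lemma greedy_shift_matching n j Y U m :
  [disjoint Y & U] -> #|Y| = m -> #|U| = m -> m * j <= #|gT| ->
  exists m', m' * (j + n.+1) < #|gT| /\ shift_matching Y U (n.+1 + m').
Proof.
have q_gt0 : 0 < #|gT| by apply/card_gt0P; exists 1%g.
elim: n j Y U m => [|n IHn] j Y U m dYU cY cU le_mj;
  have [c [Y' [U' [dense le_cm [cY' cU'] dYU' extend]]]] := greedy_step dYU cY cU;
  have shrink : (m - c) * (j + 1) < #|gT| by nia.
  by exists (m - c); split=> //; apply/extend/shift_matching_card.
have [m' [lt_m' matching]] := IHn (j + 1) _ _ _ dYU' cY' cU' (ltnW shrink).
by exists m'; split; [move: lt_m'; rewrite -addnA add1n | apply: extend].
Qed.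

End ShiftMatching.

Section TwoToOne.

Variables (T : finType) (f : T -> T).
Hypothesis f2 : two_to_one f.

Lemma card_image_two_to_one : #|[set f x | x : T]| * 2 = #|T|.
Proof.
rewrite -[RHS]sum1_card (partition_big_imset f) /= -sum_nat_const.
apply: eq_bigr => _ /imsetP [x _ ->].
rewrite sum1_card -(f2 (codom_f f x)).
by apply: eq_card => z; rewrite !inE.
Qed.

Lemma two_to_one_fiber_other x x' z :
  f x = f z -> f x' = f z -> x != z -> x' != z -> x = x'.
Proof.
move=> fxz fx'z xz x'z; set S := [set y | f y == f z].
have : #|S :\ z| <= 1.
  by have := cardsD1 z S; rewrite (f2 (codom_f f z)) inE eqxx add1n => -[<-].
by move/card_le1_eqP; apply; rewrite !inE ?xz ?x'z ?fxz ?fx'z eqxx.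
Qed.

End TwoToOne.

Lemma pres_leV (gT : finGroupType) (f : gT -> gT) (h : {perm gT}) :
  pres f <= V (fsub f h).
Proof. by rewrite /pres -minEnat; apply: (bigmin_le _ h (fun k => V (fsub f k))). Qed.

Section TwoToOneGroup.

Variables (gT : finGroupType) (f : gT -> gT).
Hypothesis f2 : two_to_one f.
Local Notation Y := [set f x | x : gT].

Lemma pres_le_shift_matching b : shift_matching Y (~: Y) b -> pres f <= b.+1.
Proof.
move=> [beta [inj_beta betaU shifts_b]].
pose rep x := odflt x [pick z | f z == f x].
have f_rep x : f (rep x) = f x by rewrite /rep; case: pickP => [z /eqP|].
have rep_eq x x' : f x = f x' -> rep x = rep x'.
  by move=> fxx'; rewrite /rep fxx'; case: pickP => [//|/(_ x')]; rewrite eqxx.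
have fY x : f x \in Y by apply: imset_f.
have betaY x : beta (f x) \notin Y by have := betaU _ (fY x); rewrite inE.
pose h0 x := if x == rep x then f x else beta (f x).
have inj_h0 : injective h0.
  move=> x x'; rewrite /h0; case: ifP => /eqP xr; case: ifP => /eqP x'r.
  - by move=> fxx'; rewrite xr x'r (rep_eq _ _ fxx').
  - by move=> fxb; have := betaY x'; rewrite -fxb fY.
  - by move=> bfx; have := betaY x; rewrite bfx fY.
  move=> /(inj_beta _ _ (fY x) (fY x')) fxx'.
  apply: (two_to_one_fiber_other f2 (z := rep x)); rewrite ?f_rep //.
    exact/eqP.
  by rewrite (rep_eq _ _ fxx'); apply/eqP.
apply: leq_trans (pres_leV f (perm inj_h0)) _.
apply: leq_trans (_ : #|1%g |: ([set (beta y * y^-1)%g | y in Y]^-1)%g| <= _).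
  apply/subset_leq_card/subsetP => _ /imsetP [x _ ->].
  rewrite /fsub permE /h0 in_setU1; case: ifP => _; first by rewrite mulgV eqxx.
  by apply/orP; right; rewrite inE invMg invgK; apply: imset_f.
by rewrite cardsU1 card_invg -add1n leq_add ?leq_b1.
Qed.

Lemma card_setC_image : #|~: Y| = #|Y|.
Proof.
apply/eqP; rewrite -(eqn_add2l #|Y|) cardsC addnn -muln2.
by rewrite (card_image_two_to_one f2).
Qed.

Lemma disjoint_image_setC : [disjoint Y & ~: Y].
Proof. by rewrite disjoints_subset setCK. Qed.

Lemma two_to_one_card_ge2 : 2 <= #|gT|.
Proof.
rewrite -(card_image_two_to_one f2) -{1}[2]mul1n leq_mul2r /=.
by apply/card_gt0P; exists (f 1%g); apply: imset_f.
Qed.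

Lemma pres_greedy_bound n : exists m, m * (n + 3) < #|gT| /\ pres f <= n.+2 + m.
Proof.
have cY := card_image_two_to_one f2.
have [m [lt_m matching]] :=
  greedy_shift_matching n disjoint_image_setC (erefl _) card_setC_image (eq_leq cY).
by exists m; split; [rewrite addn3 | exact: pres_le_shift_matching matching].
Qed.

(* The greedy bound only gives 3 here, but a single step already matches
   c >= 4/3, i.e. both points of Y. *)
Lemma pres_le2_card4 : #|gT| = 4 -> pres f <= 2.
Proof.
move=> q4; have cY : #|Y| = 2.
  by apply/eqP; rewrite -(eqn_pmul2r (isT : 0 < 2)) (card_image_two_to_one f2) q4.
have [c [Y' [U' [dense le_c2 [cY' cU'] dYU' extend]]]] :=
  greedy_step disjoint_image_setC cY (etrans card_setC_image cY).
have c2 : c = 2 by move: dense; rewrite q4; lia.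
have := shift_matching_card dYU' cY' cU'; rewrite c2 => /extend.
exact: pres_le_shift_matching.
Qed.

(* Run k - 2 greedy steps, where k is the ceiling of sqrt q. *)
Lemma pres_sqr_lt : pres f * pres f < 4 * #|gT|.
Proof.
have q_ge2 := two_to_one_card_ge2.
suff [p [lt_p le_pres]] : exists p, p * p < 4 * #|gT| /\ pres f <= p.
  exact: leq_ltn_trans (leq_mul le_pres le_pres) lt_p.
have [le_q4 | gt_q4] := leqP #|gT| 4.
  have [m [lt_m le_pres]] := pres_greedy_bound 0.
  by exists (2 + m); split=> //; nia.
have ex_k : exists k, #|gT| <= k * k by exists #|gT|; nia.
case: (ex_minnP ex_k) => k le_qk min_k.
have k_ge3 : 3 <= k by rewrite leqNgt; apply/negP => lt_k3; nia.
have lt_k1 : (k - 1) * (k - 1) < #|gT| by rewrite ltnNge; apply/negP => /min_k; lia.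
have [m [lt_m le_pres]] := pres_greedy_bound (k - 3); rewrite subnK // in lt_m.
by exists (k - 1 + m); split; [nia | lia].
Qed.

Lemma pres_add2_le_double_root r : #|gT| = r ^ 2 -> pres f + 2 <= 2 * r.
Proof.
move=> qr; have q_ge2 := two_to_one_card_ge2.
have [lt_r3 | ge_r3] := ltnP r 3.
  have r2 : r = 2 by nia.
  by have := pres_le2_card4; rewrite qr r2; lia.
have [m [lt_m le_pres]] := pres_greedy_bound (r - 3).
rewrite subnK // qr in lt_m.
have : m < r by nia.
lia.
Qed.

End TwoToOneGroup.

Local Open Scope ring_scope.

Lemma nat_le_ceil_double_sqrt (R : archiRcfType) (p q : nat) :
  (p * p < 4 * q)%N -> p%:R <= (Num.ceil (2 * Num.sqrt (q%:R : R)) - 1)%:~R :> R.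
Proof.
move=> lt_pq.
have lt_p : p%:R < 2 * Num.sqrt (q%:R : R).
  rewrite ltNge; apply/negP => le_p.
  have sqrt_ge0 : 0 <= 2 * Num.sqrt (q%:R : R) by rewrite mulr_ge0 ?sqrtr_ge0.
  have := ler_pM sqrt_ge0 sqrt_ge0 le_p le_p.
  by rewrite mulrACA -(expr2 (Num.sqrt _)) sqr_sqrtr ?ler0n // -!natrM ler_nat leqNgt lt_pq.
rewrite -[p%:R]/((p%:Z)%:~R) ler_int -ltzD1 subrK.
by rewrite ceil_gt_int.
Qed.

Lemma nat_le_double_sqrt_sqr (R : rcfType) (p r : nat) :
  (p + 2 <= 2 * r)%N -> p%:R <= 2 * Num.sqrt ((r ^ 2)%N%:R : R) - 2.
Proof.
rewrite -(ler_nat R) natrD natrM natrX sqrtr_sqr ger0_norm ?ler0n //.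
by move: (p%:R) (r%:R) => a b; lra.
Qed.

Theorem theorem1p2 (gT : finGroupType) (f : gT -> gT) :
  ~~ odd #|gT| ->
  two_to_one f ->
  ((pres f)%:R <= (Num.ceil (2 * Num.sqrt (#|gT|%:R : Rdefinitions.R)) - 1)%:~R :> Rdefinitions.R) /\
  ((exists m : nat, #|gT| = (m ^ 2)%N) ->
     (pres f)%:R <= 2 * Num.sqrt (#|gT|%:R : Rdefinitions.R) - 2 :> Rdefinitions.R).
Proof.
(* Evenness of #|gT| is implied by two_to_one f (card_image_two_to_one). *)
move=> _ f2; split; first exact: nat_le_ceil_double_sqrt (pres_sqr_lt f2).
move=> [r qr]; rewrite qr.
exact/nat_le_double_sqrt_sqr/(pres_add2_le_double_root f2 qr).
Qed.
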